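(* Let $\mathbf f$ be a face degree sequence, $g\ge0$, and $p\ge j_0\ge1$. Then \[|\mathbf f|\,\beta_g(\mathbf f-\mathbf 1_{j_0})\ge j_0f_{j_0}\,\beta_g(\mathbf f-\mathbf 1_p).\] In particular, if $j_0f_{j_0}\ge\delta|\mathbf f|$ for some $\delta>0$, then $\beta_g(\mathbf f-\mathbf 1_{j_0})\ge\delta\,\beta_g(\mathbf f-\mathbf 1_p)$.
   Context: A face degree sequence is $\mathbf f=(f_j)_{j\ge1}$ of nonnegative integers, eventually zero; $|\mathbf f|=\sum_jjf_j$; $\mathbf 1_j$ is the indicator sequence of $j$. $\beta_g(\mathbf f)$ is the number of rooted bipartite maps of genus $g$ with $f_j$ faces of degree $2j$ for all $j$ (zero if some entry of $\mathbf f$ is negative). *)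

From HB Require Import structures.
From mathcomp Require Import all_boot all_order all_algebra all_fingroup.
Set Implicit Arguments. Unset Strict Implicit. Unset Printing Implicit Defensive.

(* Face degree sequences f = (f_1, f_2, ...) are represented by finite lists
   [f : seq nat] with  f_j = nth 0 f j.-1  (j >= 1); trailing entries are 0. *)

Open Scope nat_scope.

Definition fsize (f : seq nat) : nat := \sum_(i < size f) i.+1 * nth 0 f i.

Definition fdeg (f : seq nat) (j : nat) : nat := nth 0 f j.-1.

(* f - 1_j as an integer-valued sequence (entries may be negative) *)
Definition fminus1 (f : seq nat) (j : nat) : seq int :=
  [seq ((nth 0 f i)%:Z - (i.+1 == j)%:Z)%R | i <- iota 0 (maxn (size f) j)].

Definition ncycles n (p : {perm 'I_n}) (k : nat) : nat :=
  #|[set c in porbits p | #|c| == k]|.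

(* Labelled bipartite maps with n edges (edges labelled by 'I_n) are pairs
   (s, t) of permutations (black / white vertex rotations) generating a
   transitive group; vertices = cycles of s and of t, faces = cycles of
   s*t, a face of degree 2k being a cycle of length k. *)
Definition has_faces n (s t : {perm 'I_n}) (h : seq nat) : bool :=
  [forall k : 'I_(n + size h).+1,
     (0 < k) ==> (ncycles (s * t)%g k == nth 0 h k.-1)].

Definition genus_is n (s t : {perm 'I_n}) (g : nat) : bool :=
  #|porbits s| + #|porbits t| + #|porbits (s * t)%g| + 2 * g == n + 2.

Definition is_bip_map n (g : nat) (h : seq nat) (st : {perm 'I_n} * {perm 'I_n}) : bool :=
  [&& [transitive <<[set st.1; st.2]>>, on [set: 'I_n] | 'P],
      has_faces st.1 st.2 h & genus_is st.1 st.2 g].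

Definition labelled_count n g (h : seq nat) : nat :=
  #|[set st : {perm 'I_n} * {perm 'I_n} | is_bip_map g h st]|.

(* Rooted bipartite maps of genus g with h_j faces of degree 2j:
   n = |h| edges; rooted count = labelled count / (n-1)!.
   Maps have at least one edge (the vertex map has a face of degree 0). *)
Definition beta_nat (g : nat) (h : seq nat) : nat :=
  let n := fsize h in
  if n == 0 then 0 else labelled_count n g h %/ (n.-1)`!.

Definition beta (g : nat) (h : seq int) : nat :=
  if all (fun x : int => (0 <= x)%R) h then beta_nat g (map absz h) else 0.

(* A labelled bipartite map with n edges is a pair (s, t) of permutations of
   'I_n generating a transitive group, its faces being the cycles of s * t; as
   the stabiliser of a point of 'I_n acts freely on such pairs by conjugation,
   (n-1)! divides their number, and the rooted count beta is the quotient.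
   Inserting a new edge k right after an edge a, next to a at its black vertex
   and as a leaf at a new white vertex, keeps the genus and lengthens the face
   of a by one; from the new map, k and a can be read back.  Start from a map of
   f - 1_p with an edge a marked in a face of length j0 (there are j0 f_j0 such
   edges) and insert p - j0 edges at the marked face: the result is a map of
   f - 1_j0 with a marked edge, so with nA = |f - 1_p| and nB = |f - 1_j0|,
     j0 f_j0 L(f - 1_p) nB! / nA! <= nB L(f - 1_j0),
   for the labelled counts L, which gives the claim after division by
   (nA-1)! and (nB-1)!. *)

From HB Require Import structures.
From mathcomp Require Import all_boot all_order all_algebra all_fingroup.
From mathcomp Require Import zify.
Import Order.TTheory GRing.Theory Num.Theory.
Set Implicit Arguments. Unset Strict Implicit. Unset Printing Implicit Defensive.
Open Scope nat_scope.

Section PermOrbits.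
Variable T : finType.
Implicit Types (q : {perm T}) (Y : {set T}).

Lemma porbit_morph (T' : finType) (q : {perm T}) (q' : {perm T'}) (phi : T -> T') x :
  {in porbit q x, forall y, q' (phi y) = phi (q y)} ->
  porbit q' (phi x) = phi @: porbit q x.
Proof.
move=> phiq.
have phiX i : (q' ^+ i)%g (phi x) = phi ((q ^+ i)%g x).
  elim: i => [|i IHi]; first by rewrite !expg0 !perm1.
  by rewrite !expgSr !permM IHi phiq // mem_porbit.
apply/setP=> z; apply/porbitP/imsetP => [[i ->]|[_ /porbitP[i ->] ->]].
  by exists ((q ^+ i)%g x); rewrite ?mem_porbit ?phiX.
by exists i; rewrite phiX.
Qed.

Lemma mem_porbit_perm q x y : y \in porbit q x -> q y \in porbit q x.
Proof. by move=> /porbitP[i ->]; rewrite -permM -expgSr mem_porbit. Qed.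

Lemma porbit_sub q x Y :
  x \in Y -> {in Y, forall y, q y \in Y} -> porbit q x \subset Y.
Proof.
move=> Yx qY; apply/subsetP => _ /porbitP[i ->].
by elim: i => [|i IHi]; rewrite ?expg0 ?perm1 // expgSr permM qY.
Qed.

Lemma perm_stable_mem q Y :
  {in Y, forall y, q y \in Y} -> forall z, (q z \in Y) = (z \in Y).
Proof.
move=> qY.
have qYE : q @: Y = Y.
  apply/eqP; rewrite eqEcard card_imset ?leqnn ?andbT; last exact: perm_inj.
  by apply/subsetP => _ /imsetP[y Yy ->]; apply: qY.
by move=> z; rewrite -{1}qYE mem_imset //; apply: perm_inj.
Qed.

Definition transitive2 (s t : {perm T}) := [transitive <<[set s; t]>>, on [set: T] | 'P].

Definition perm2_stable (s t : {perm T}) Y := {in Y, forall y, s y \in Y /\ t y \in Y}.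

Lemma transitive2_stable s t x Y :
  transitive2 s t -> x \in Y -> perm2_stable s t Y -> Y = setT.
Proof.
move=> st_tr Yx stY; apply/eqP; rewrite eqEsubset subsetT /=.
rewrite -(atransP st_tr x (in_setT x)).
have stN : (<<[set s; t]>> \subset 'N(Y | 'P))%g.
  rewrite gen_subG; apply/subsetP => u /set2P[->|->];
    by apply/astabsP => z /=; apply: perm_stable_mem => y /stY[].
apply/subsetP => _ /orbitP[u Gu <-].
by rewrite (astabs_act _ (subsetP stN u Gu)).
Qed.

Lemma transitive2_of_stable s t x :
  (forall Y, x \in Y -> perm2_stable s t Y -> Y = setT) -> transitive2 s t.
Proof.
move=> stableT; apply/imsetP; exists x => //; symmetry; apply: stableT.
  exact: orbit_refl.
move=> _ /orbitP[u Gu <-].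
have orbitM v : v \in [set s; t] -> ('P%act ('P%act x u) v \in orbit 'P <<[set s; t]>>%g x).
  by move=> stv; rewrite -actM; apply: mem_orbit; rewrite groupM // mem_gen.
by split; apply: orbitM; rewrite !inE eqxx ?orbT.
Qed.

End PermOrbits.

Lemma ncycles_count n (q : {perm 'I_n}) m :
  m * ncycles q m = \sum_x (#|porbit q x| == m).
Proof.
have -> : ncycles q m = #|[set porbit q x | x : 'I_n & #|porbit q x| == m]|.
  apply: eq_card => C; rewrite inE; apply/andP/imsetP.
    by move=> [/imsetP[x _ ->] qxm]; exists x; rewrite ?inE.
  by move=> [x]; rewrite inE => qxm ->; rewrite imset_f.
rewrite (eq_bigr (fun x => if #|porbit q x| == m then 1 else 0)); last first.
  by move=> x _; case: eqP.
rewrite -big_mkcond sum1dep_card -[RHS]sum1_card (partition_big_imset (porbit q)) /=.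
rewrite mulnC -sum_nat_const; apply: eq_bigr => C /imsetP[y]; rewrite inE => /eqP qym ->.
rewrite -[in LHS]qym -sum1_card; apply: eq_bigl => x.
rewrite !inE eq_porbit_mem; case: (boolP (x \in _)) => [xy|]; rewrite ?andbF //.
by move: xy; rewrite -eq_porbit_mem => /eqP ->; rewrite qym eqxx.
Qed.

Lemma ncycles_eq0 n (q : {perm 'I_n}) m : n < m -> ncycles q m = 0.
Proof.
move=> nm; apply/eqP; rewrite -(eqn_pmul2l (leq_ltn_trans (leq0n n) nm)) muln0.
rewrite ncycles_count; apply/eqP/big1 => x _.
have : #|porbit q x| <= n by rewrite -[X in _ <= X]card_ord max_card.
by case: eqP => // ->; rewrite leqNgt nm.
Qed.

Section Conjugation.
Variables (T : finType) (pi : {perm T}).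
Implicit Types (q s t : {perm T}).

Lemma porbit_conj q x : porbit (q ^ pi)%g (pi x) = pi @: porbit q x.
Proof. by apply: porbit_morph => y _; rewrite permJ. Qed.

Lemma card_porbits_conj q : #|porbits (q ^ pi)%g| = #|porbits q|.
Proof.
have -> : porbits (q ^ pi)%g = (fun C : {set T} => pi @: C) @: porbits q.
  apply/setP => C; apply/imsetP/imsetP => [[y _ ->]|[_ /imsetP[x _ ->] ->]].
    by exists (porbit q (pi^-1 y)%g); rewrite ?imset_f // -porbit_conj permKV.
  by exists (pi x); rewrite ?porbit_conj.
by rewrite card_imset //; apply: imset_inj; apply: perm_inj.
Qed.

Lemma transitive2_conj s t :
  transitive2 s t -> transitive2 (s ^ pi)%g (t ^ pi)%g.
Proof.
move=> st_tr; have [x _ _] := imsetP st_tr.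
apply: (transitive2_of_stable (x := x)) => Y Yx stY.
have preY : [set z | pi z \in Y] = setT.
  apply: (transitive2_stable (x := (pi^-1 x)%g) st_tr); first by rewrite inE permKV.
  by move=> y; rewrite !inE => /stY; rewrite !permJ.
apply/setP => z; rewrite inE.
by have := in_setT (pi^-1 z)%g; rewrite -preY inE permKV.
Qed.

Lemma transitive2_centralizer s t x :
  transitive2 s t -> (s ^ pi)%g = s -> (t ^ pi)%g = t -> pi x = x -> pi = 1%g.
Proof.
move=> st_tr spi tpi pix.
have fixT : [set z | pi z == z] = setT.
  apply: (transitive2_stable st_tr (x := x)); first by rewrite inE pix.
  move=> z; rewrite !inE => /eqP piz.
  by rewrite -[pi (s z)]permJ -[pi (t z)]permJ spi tpi piz !eqxx.
by apply/permP => z; rewrite perm1; apply/eqP; have := in_setT z; rewrite -fixT inE.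
Qed.

End Conjugation.

Lemma ncycles_conj n (q pi : {perm 'I_n}) m : 0 < m ->
  ncycles (q ^ pi)%g m = ncycles q m.
Proof.
move=> m_gt0; apply/eqP; rewrite -(eqn_pmul2l m_gt0) !ncycles_count.
rewrite (reindex_inj (@perm_inj _ pi)) /=; apply/eqP/eq_bigr => x _.
by rewrite porbit_conj card_imset //; apply: perm_inj.
Qed.

Section LiftPerm.
Variables (n : nat) (q : {perm 'I_n}) (k : 'I_n.+1).
Local Notation qk := (lift_perm k k q).

Lemma porbit_lift_perm x : porbit qk (lift k x) = lift k @: porbit q x.
Proof. by apply: porbit_morph => y _; rewrite lift_perm_lift. Qed.

Lemma porbit_lift_perm_id : porbit qk k = [set k].
Proof.
apply/eqP; rewrite eqEsubset sub1set porbit_id andbT.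
by apply: porbit_sub; rewrite ?set11 // => _ /set1P ->; rewrite lift_perm_id set11.
Qed.

Lemma notin_lift_imset (C : {set 'I_n}) : k \notin lift k @: C.
Proof. by apply/imsetP => [[x _ /eqP]]; rewrite (negbTE (neq_lift k x)). Qed.

Lemma card_porbits_lift_perm : #|porbits qk| = #|porbits q|.+1.
Proof.
pose liftS (C : {set 'I_n}) := lift k @: C.
have -> : porbits qk = [set k] |: liftS @: porbits q.
  apply/setP=> C; rewrite !inE; apply/imsetP/orP.
    move=> [y _ ->]; case: (unliftP k y) => [x ->|->].
      by right; rewrite porbit_lift_perm imset_f ?imset_f.
    by left; rewrite porbit_lift_perm_id.
  move=> [/eqP ->|/imsetP[_ /imsetP[x _ ->] ->]].
    by exists k; rewrite ?porbit_lift_perm_id.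
  by exists (lift k x); rewrite ?porbit_lift_perm.
rewrite cardsU1 card_imset; last exact: imset_inj lift_inj.
suff -> : [set k] \notin liftS @: porbits q by [].
apply/imsetP => [[C _ kC]]; move: (notin_lift_imset C).
by rewrite /liftS in kC; rewrite -kC set11.
Qed.

End LiftPerm.

(* [ins q a k] inserts the new point [k] right after [a] in the cycle of [q]
   through [a], the old points being relabelled by [lift k]. *)
Definition ins n (q : {perm 'I_n}) (a : 'I_n) (k : 'I_n.+1) : {perm 'I_n.+1} :=
  (tperm (lift k a) k * lift_perm k k q)%g.

Section Insertion.
Variables (n : nat) (q : {perm 'I_n}) (a : 'I_n) (k : 'I_n.+1).
Local Notation q' := (ins q a k).
Local Notation j := #|porbit q a|.

Lemma ins_lift_a : q' (lift k a) = k.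
Proof. by rewrite permM tpermL lift_perm_id. Qed.

Lemma ins_k : q' k = lift k (q a).
Proof. by rewrite permM tpermR lift_perm_lift. Qed.

Lemma ins_lift x : x != a -> q' (lift k x) = lift k (q x).
Proof.
move=> xa; rewrite permM tpermD ?lift_perm_lift ?neq_lift //.
by rewrite (inj_eq lift_inj) eq_sym.
Qed.

Lemma porbit_ins_notin x : x \notin porbit q a ->
  porbit q' (lift k x) = lift k @: porbit q x.
Proof.
move=> xNa; apply: porbit_morph => y xy; apply: ins_lift.
by apply: contraNneq xNa => ya; rewrite porbit_sym -ya.
Qed.

Lemma porbit_ins_k : porbit q' k = k |: lift k @: porbit q a.
Proof.
apply/eqP; rewrite eqEsubset; apply/andP; split.
  apply: porbit_sub => [|_ /setU1P[->|/imsetP[x ax ->]]]; first exact: setU11.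
    by rewrite ins_k setU1r ?imset_f ?(mem_porbit q 1).
  have [->|xa] := eqVneq x a; first by rewrite ins_lift_a setU11.
  by rewrite ins_lift // setU1r ?imset_f ?mem_porbit_perm.
rewrite subUset sub1set porbit_id sub_imset_pre /=.
apply: porbit_sub => [|x]; rewrite !inE.
  by rewrite porbit_sym -{1}ins_lift_a mem_porbit_perm ?porbit_id.
have [-> _|xa] := eqVneq x a; first by rewrite -ins_k mem_porbit_perm ?porbit_id.
by rewrite -ins_lift //; apply: mem_porbit_perm.
Qed.

Lemma card_porbit_ins_k : #|porbit q' k| = j.+1.
Proof. by rewrite porbit_ins_k cardsU1 notin_lift_imset card_imset //; apply: lift_inj. Qed.

Lemma card_porbit_ins x :
  #|porbit q' (lift k x)| = #|porbit q x| + (x \in porbit q a).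
Proof.
have [xa|xNa] := boolP (x \in porbit q a); last first.
  by rewrite porbit_ins_notin // card_imset ?addn0 //; apply: lift_inj.
have : lift k x \in porbit q' k by rewrite porbit_ins_k setU1r ?imset_f.
rewrite -eq_porbit_mem => /eqP ->; rewrite card_porbit_ins_k addn1.
by move: xa; rewrite -eq_porbit_mem => /eqP ->.
Qed.

Lemma card_porbits_ins : #|porbits q'| = #|porbits q|.
Proof.
have := porbits_mul_tperm (lift_perm k k q) (lift k a) k.
rewrite porbit_lift_perm_id inE eq_sym neq_lift card_porbits_lift_perm /=.
by rewrite addn1 -addn2 => /eqP; rewrite eqn_add2r => /eqP.
Qed.

Lemma ncycles_ins m : 0 < m ->
  ncycles q' m + (m == j) = ncycles q m + (m == j.+1).
Proof.
move=> m_gt0; apply/eqP; rewrite -(eqn_pmul2l m_gt0) !mulnDr; apply/eqP.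
have eqm_mul (i : nat) : m * (m == i) = i * (i == m).
  by rewrite eq_sym; case: eqVneq => [->|]; rewrite ?muln0.
have sum_orbit (F : nat -> nat) : \sum_(x in porbit q a) F #|porbit q x| = j * F j.
  by rewrite -sum_nat_const; apply: eq_bigr => x; rewrite -eq_porbit_mem => /eqP ->.
have in_a : \sum_(x in porbit q a) (#|porbit q' (lift k x)| == m) = j * (j.+1 == m).
  rewrite -(sum_orbit (fun i => (i.+1 == m) : nat)).
  by apply: eq_bigr => x xa; rewrite card_porbit_ins xa addn1.
have out_a : \sum_(x < n | x \notin porbit q a) (#|porbit q' (lift k x)| == m) =
             \sum_(x < n | x \notin porbit q a) (#|porbit q x| == m).
  by apply: eq_bigr => x xNa; rewrite card_porbit_ins (negbTE xNa) addn0.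
rewrite !eqm_mul !ncycles_count (bigD1_ord k) //= card_porbit_ins_k.
rewrite (bigID (mem (porbit q a))) [in RHS](bigID (mem (porbit q a))) /=.
rewrite in_a out_a (sum_orbit (fun i => (i == m) : nat)) mulSn.
by rewrite addnA addnAC [RHS]addnC addnA.
Qed.

Lemma transitive2_ins t :
  transitive2 q t -> transitive2 q' (lift_perm k k t).
Proof.
move=> qt_tr; apply: (transitive2_of_stable (x := k)) => Y kY stY.
pose Y0 := [set z | lift k z \in Y].
have qa_Y0 : q a \in Y0 by rewrite inE -ins_k; case: (stY _ kY).
have stY0 : perm2_stable q t Y0.
  move=> z; rewrite !inE => zY; split; last first.
    by rewrite -(lift_perm_lift k k t z); case: (stY _ zY).
  have [->|za] := eqVneq z a; first by rewrite inE in qa_Y0.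
  by rewrite -(ins_lift za); case: (stY _ zY).
have Y0T := transitive2_stable qt_tr qa_Y0 stY0.
apply/setP => y; rewrite inE; case: (unliftP k y) => [z ->|->] //.
by have := in_setT z; rewrite -Y0T inE.
Qed.

End Insertion.

Lemma ins_mul n (s t : {perm 'I_n}) a k :
  (ins s a k * lift_perm k k t)%g = ins (s * t)%g a k.
Proof. by rewrite /ins -mulgA lift_permM. Qed.

(* A face profile [F] lists in [F i] the number of faces of degree [2 i.+1],
   as [nth 0 h i] does for a face degree sequence [h]. *)
Definition face_profile N n (q : {perm 'I_n}) (F : nat -> nat) :=
  [forall i : 'I_N, ncycles q i.+1 == F i].

Definition with_face (G : nat -> nat) j i := G i + (i.+1 == j).

Lemma card_dep_pairs (A B : finType) (S : {pred A}) (P : A -> B -> bool) :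
  #|[set x : A * B | (x.1 \in S) && P x.1 x.2]| = \sum_(a in S) \sum_b P a b.
Proof.
rewrite -sum1dep_card -(pair_big_dep (mem S) P (fun _ _ => 1)) /=.
apply: eq_bigr => a _; rewrite big_mkcond /=; apply: eq_bigr => b _.
by case: (P a b).
Qed.

Section MarkedMaps.
(* Only faces of length at most [N] are recorded; [labelled_count_maps] shows
   that nothing is lost as soon as [n <= N]. *)
Variables N g : nat.

Definition is_map n F (st : {perm 'I_n} * {perm 'I_n}) :=
  [&& transitive2 st.1 st.2, genus_is st.1 st.2 g & face_profile N (st.1 * st.2)%g F].

Definition maps n F := [set st : {perm 'I_n} * {perm 'I_n} | is_map F st].

Definition marked n G j := [set x : {perm 'I_n} * {perm 'I_n} * 'I_n |
  is_map (with_face G j) x.1 && (#|porbit (x.1.1 * x.1.2)%g x.2| == j)].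

(* The new edge [k] follows the marked edge [a] at its black vertex and in its
   face, and is alone at a new white vertex. *)
Definition grow_marked n (y : {perm 'I_n} * {perm 'I_n} * 'I_n * 'I_n.+1) :
    {perm 'I_n.+1} * {perm 'I_n.+1} * 'I_n.+1 :=
  let: (s, t, a, k) := y in ((ins s a k, lift_perm k k t), lift k a).

Lemma grow_marked_inj n : injective (@grow_marked n).
Proof.
move=> [[[s t] a] k] [[[s' t'] a'] k'] [Es Et Ea].
have {}Ea : lift k a = lift k' a' by apply: val_inj.
have Ek : k = k' by rewrite -(ins_lift_a s a k) Es Ea ins_lift_a.
subst k'; have Ea' := lift_inj Ea; subst a'.
have lift_perm_inj (u v : {perm 'I_n}) : lift_perm k k u = lift_perm k k v -> u = v.
  move=> Euv; apply/permP => x; apply: (@lift_inj _ k).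
  by rewrite -(lift_perm_lift k k u) -(lift_perm_lift k k v) Euv.
by move: Es; rewrite /ins (lift_perm_inj _ _ Et) => /mulgI /lift_perm_inj ->.
Qed.

Lemma grow_marked_mem n G j y :
  y.1 \in marked n G j -> grow_marked y \in marked n.+1 G j.+1.
Proof.
case: y => [[[s t] a] k]; rewrite !inE /= => /andP[/and3P[st_tr st_g /forallP st_F] /eqP st_a].
rewrite ins_mul card_porbit_ins porbit_id addn1 st_a eqxx andbT.
apply/and3P; split.
- exact: transitive2_ins.
- move: st_g; rewrite /genus_is ins_mul !card_porbits_ins card_porbits_lift_perm.
  by move/eqP => /= st_g; apply/eqP; lia.
- apply/forallP => i; apply/eqP; have := ncycles_ins (s * t)%g a k (ltn0Sn i).
  by rewrite /= (eqP (st_F i)) /with_face st_a addnAC ins_mul => /addIn.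
Qed.

Lemma marked_step n G j : #|marked n G j| * n.+1 <= #|marked n.+1 G j.+1|.
Proof.
have <- : #|@grow_marked n @: setX (marked n G j) [set: 'I_n.+1]| = #|marked n G j| * n.+1.
  by rewrite card_imset ?cardsX ?cardsT ?card_ord //; apply: grow_marked_inj.
apply/subset_leq_card/subsetP => _ /imsetP[[y k] /setXP[y1 _] ->].
exact: grow_marked_mem.
Qed.

Lemma marked_iter n G j d :
  #|marked n G j| * (d + n)`! <= #|marked (d + n) G (j + d)| * n`!.
Proof.
elim: d => [|d IHd]; first by rewrite add0n addn0.
rewrite addSn factS mulnCA mulnC (leq_trans (leq_mul IHd (leqnn _))) //.
by rewrite mulnAC leq_mul2r addnS marked_step orbT.
Qed.

Lemma card_marked n G j : 0 < j <= N ->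
  #|marked n G j| = #|maps n (with_face G j)| * (j * (G j.-1).+1).
Proof.
case/andP=> j_gt0 jN; have j1N : j.-1 < N by rewrite (leq_trans _ jN) ?ltn_predL.
pose j1 := Ordinal j1N.
have -> : marked n G j = [set x | (x.1 \in maps n (with_face G j)) &&
                                  (#|porbit (x.1.1 * x.1.2)%g x.2| == j)].
  by apply/setP => x; rewrite !inE.
rewrite (card_dep_pairs _ (fun st x => #|porbit (st.1 * st.2)%g x| == j)).
rewrite -sum_nat_const; apply: eq_bigr => st.
rewrite inE => /and3P[_ _ /forallP /(_ j1) /eqP].
rewrite /with_face /= prednK // eqxx addn1 => <-.
by rewrite ncycles_count.
Qed.

Lemma card_marked_le n G j : #|marked n G j| <= #|maps n (with_face G j)| * n.
Proof.
have sub : marked n G j \subset setX (maps n (with_face G j)) [set: 'I_n].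
  by apply/subsetP => x; rewrite !inE andbT => /andP[].
by rewrite (leq_trans (subset_leq_card sub)) // cardsX cardsT card_ord.
Qed.

End MarkedMaps.

Lemma nth_le_fsize h i : i.+1 * nth 0 h i <= fsize h.
Proof.
case: (ltnP i (size h)) => [ih|hi]; last by rewrite nth_default ?muln0.
by rewrite /fsize (bigD1 (Ordinal ih)) //= leq_addr.
Qed.

Lemma nth_eq0_fsize h i : fsize h <= i -> nth 0 h i = 0.
Proof.
by move=> hi; have := leq_trans (nth_le_fsize h i) hi; case: (nth 0 h i) => // x; nia.
Qed.

Lemma fdeg_le_fsize f j : 0 < j -> j * fdeg f j <= fsize f.
Proof. by move=> j_gt0; rewrite /fdeg -{1}(prednK j_gt0) nth_le_fsize. Qed.

Lemma has_facesP n (s t : {perm 'I_n}) h :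
  reflect (forall i, ncycles (s * t)%g i.+1 = nth 0 h i) (has_faces s t h).
Proof.
apply: (iffP forallP) => [faces i|faces k]; last first.
  by apply/implyP => k_gt0; rewrite -faces prednK.
case: (ltnP i (n + size h)) => [ilt|ige].
  by have := faces (Ordinal (ilt : i.+1 < (n + size h).+1)); rewrite /= => /eqP.
by rewrite ncycles_eq0 ?nth_default //; lia.
Qed.

Lemma face_profileP N n (q : {perm 'I_n}) F : n <= N -> (forall i, N <= i -> F i = 0) ->
  reflect (forall i, ncycles q i.+1 = F i) (face_profile N q F).
Proof.
move=> nN F0; apply: (iffP forallP) => [prof i|faces i]; last exact/eqP.
case: (ltnP i N) => [iN|Ni]; first exact/eqP/(prof (Ordinal iN)).
by rewrite F0 // ncycles_eq0 // ltnS (leq_trans nN).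
Qed.

Lemma labelled_count_maps N g n h F : fsize h = n -> n <= N -> F =1 nth 0 h ->
  labelled_count n g h = #|maps N g n F|.
Proof.
move=> hn nN Fh; apply: eq_card => st; rewrite !inE /is_bip_map /is_map.
have F0 i : N <= i -> F i = 0 by move=> Ni; rewrite Fh nth_eq0_fsize // hn (leq_trans nN).
apply/and3P/and3P => [[st_tr /has_facesP st_F st_g]|
                     [st_tr st_g /(face_profileP _ nN F0) st_F]].
  by split=> //; apply/(face_profileP _ nN F0) => i; rewrite st_F Fh.
by split=> //; apply/has_facesP => i; rewrite st_F Fh.
Qed.

Section ConjugationAction.
Variable T : finType.
Implicit Types (s t pi : {perm T}) (st : {perm T} * {perm T}).

Definition conj2 st pi := ((st.1 ^ pi)%g, (st.2 ^ pi)%g).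

Lemma conj2_1 : conj2^~ 1%g =1 id.
Proof. by move=> [s t]; rewrite /conj2 !conjg1. Qed.

Lemma conj2_M st : act_morph conj2 st.
Proof. by case: st => s t pi pi'; rewrite /conj2 !conjgM. Qed.

Definition conj2_action := TotalAction conj2_1 conj2_M.

End ConjugationAction.

Lemma card_perm_stab n (x : 'I_n) : n * #|('C_[set: {perm 'I_n}][x | 'P])%g| = n`!.
Proof.
have orbitT : orbit 'P [set: {perm 'I_n}] x = [set: 'I_n].
  apply/setP => y; rewrite inE; apply/orbitP.
  by exists (tperm x y); rewrite ?inE //= apermE tpermL.
by rewrite -{1}(card_ord n) -cardsT -orbitT card_orbit_stab cardsT card_Sn.
Qed.

Lemma dvdn_fact_card_conj_stable n (S : {set {perm 'I_n} * {perm 'I_n}}) :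
  (forall st pi, st \in S -> conj2 st pi \in S) ->
  {in S, forall st, transitive2 st.1 st.2} -> n.-1`! %| #|S|.
Proof.
case: n S => [|n] S S_conj S_tr; first by rewrite dvd1n.
(* The stabiliser [H] of [ord0] acts freely on [S]. *)
pose H := ('C_[set: {perm 'I_n.+1}][ord0 | 'P])%G.
have cardH : #|H| = n`! by apply/eqP; rewrite -(eqn_pmul2l (ltn0Sn n)) -factS card_perm_stab.
have actsH : [acts H, on S | conj2_action _].
  apply/subsetP => pi _; apply/astabsP => st /=; apply/idP/idP => [Sst|/S_conj //].
  have := S_conj _ (pi^-1)%g Sst.
  by rewrite /conj2 /= -!conjgM !mulgV !conjg1 -surjective_pairing.
rewrite -(acts_sum_card_orbit actsH) /= -cardH; apply: dvdn_sum => _ /imsetP[st Sst ->].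
rewrite -(card_orbit_stab (conj2_action _) H st).
suff -> : ('C_H[st | conj2_action _])%g = 1%g by rewrite cards1 muln1.
apply/trivgP/subsetP => pi /setIP[/setIP[_ /astab1P pi0] /astab1P].
case: st Sst => s t /S_tr st_tr [spi tpi]; apply/set1P.
exact: (transitive2_centralizer st_tr spi tpi pi0).
Qed.

Lemma is_bip_map_conj n g h (st : {perm 'I_n} * {perm 'I_n}) pi :
  is_bip_map g h st -> is_bip_map g h (conj2 st pi).
Proof.
case: st => s t /and3P[st_tr /has_facesP st_F st_g]; apply/and3P; split => /=.
- exact: transitive2_conj.
- by apply/has_facesP => i; rewrite -conjMg ncycles_conj.
- by rewrite /genus_is -conjMg !card_porbits_conj.
Qed.

Lemma dvdn_fact_labelled_count n g h : n.-1`! %| labelled_count n g h.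
Proof.
apply: dvdn_fact_card_conj_stable => [st pi|st]; rewrite !inE.
  exact: is_bip_map_conj.
by case/and3P.
Qed.

(* [f - 1_p] as a sequence of naturals; meaningful only when [0 < fdeg f p],
   since otherwise [absz] turns the entry [-1] into [1]. *)
Definition fsub1 f p : seq nat := map absz (fminus1 f p).

Lemma nth_fsub1 f p i : 0 < fdeg f p ->
  nth 0 (fsub1 f p) i = nth 0 f i - (i.+1 == p).
Proof.
move=> fp_gt0; case: (ltnP i (maxn (size f) p)) => [ilt|ige].
  rewrite (nth_map 0%R) ?(nth_map 0) ?size_map ?size_iota // nth_iota // add0n subzn //.
  by case: eqVneq => // ip; move: fp_gt0; rewrite -ip.
rewrite !nth_default ?size_map ?size_iota //.
by rewrite (leq_trans (leq_maxl _ _) ige).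
Qed.

Lemma beta_fminus1 f g p : 0 < fdeg f p -> beta g (fminus1 f p) = beta_nat g (fsub1 f p).
Proof.
move=> fp_gt0; rewrite /beta; case: allP => // -[x /mapP[i _ ->]].
by rewrite subr_ge0 lez_nat; case: eqVneq => // ip; move: fp_gt0; rewrite -ip.
Qed.

Lemma beta_fminus1_eq0 f g p : 0 < p -> fdeg f p = 0 -> beta g (fminus1 f p) = 0.
Proof.
move=> p_gt0 fp0; rewrite /beta; case: allP => // all_ge0.
have : ((fdeg f p)%:Z - 1 \in fminus1 f p)%R.
  apply/mapP; exists p.-1; last by rewrite prednK // eqxx.
  by rewrite mem_iota add0n (leq_trans _ (leq_maxr _ _)) // prednK.
by move/all_ge0; rewrite fp0.
Qed.

Lemma fsize_fsub1 f p : 0 < p -> 0 < fdeg f p -> fsize (fsub1 f p) + p = fsize f.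
Proof.
move=> p_gt0 fp_gt0.
have pf : p.-1 < size f.
  by rewrite ltnNge; apply: contraTN fp_gt0 => fp; rewrite /fdeg nth_default.
have size_fsub1 : size (fsub1 f p) = size f.
  by rewrite !size_map size_iota; apply/maxn_idPl; rewrite -(prednK p_gt0).
rewrite /fsize size_fsub1 (bigD1 (Ordinal pf)) // [RHS](bigD1 (Ordinal pf)) //=.
rewrite nth_fsub1 // prednK // eqxx.
rewrite (eq_bigr (fun i : 'I_(size f) => i.+1 * nth 0 f i)) => [|i ip]; last first.
  rewrite nth_fsub1 //; suff -> : (i.+1 == p) = false by rewrite subn0.
  by apply: contraNF ip => /eqP ip; apply/eqP/val_inj; rewrite /= -ip.
by rewrite addnAC -mulnSr subn1 prednK.
Qed.

Lemma labelled_count_fsub1_le f g p j0 :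
  0 < j0 -> j0 < p -> 0 < fdeg f j0 -> 0 < fdeg f p ->
  j0 * fdeg f j0 * labelled_count (fsize (fsub1 f p)) g (fsub1 f p)
    * (fsize (fsub1 f j0))`!
  <= fsize (fsub1 f j0) * labelled_count (fsize (fsub1 f j0)) g (fsub1 f j0)
    * (fsize (fsub1 f p))`!.
Proof.
move=> j0_gt0 j0p fj0 fp; have p_gt0 := ltn_trans j0_gt0 j0p.
set nA := fsize (fsub1 f p); set nB := fsize (fsub1 f j0).
have nBE : nB = p - j0 + nA.
  by have := fsize_fsub1 j0_gt0 fj0; have := fsize_fsub1 p_gt0 fp; rewrite -/nA -/nB; lia.
(* The faces shared by [f - 1_p] and [f - 1_j0]. *)
pose G i := nth 0 f i - (i.+1 == p) - (i.+1 == j0).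
have fsub1_p : nth 0 (fsub1 f p) =1 with_face G j0.
  move=> i; rewrite nth_fsub1 // /with_face /G.
  case: (eqVneq i.+1 j0) => [ij0|]; last by rewrite subn0 addn0.
  rewrite ij0 (ltn_eqF j0p) subn0 subn1 addn1 prednK //.
  by move: fj0; rewrite /fdeg -ij0.
have fsub1_j0 : nth 0 (fsub1 f j0) =1 with_face G p.
  move=> i; rewrite nth_fsub1 // /with_face /G.
  case: (eqVneq i.+1 p) => [ip|]; last by rewrite subn0 addn0.
  rewrite ip eq_sym (ltn_eqF j0p) !subn0 subn1 addn1 prednK //.
  by move: fp; rewrite /fdeg -ip.
have fj0E : fdeg f j0 = (G j0.-1).+1.
  by rewrite /G /fdeg prednK // (ltn_eqF j0p) eqxx subn0 subn1 prednK.
have j0nA : j0 <= nA.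
  have := fdeg_le_fsize (fsub1 f p) j0_gt0.
  rewrite /fdeg nth_fsub1 // prednK // (ltn_eqF j0p) subn0; apply: leq_trans.
  by rewrite leq_pmulr.
have -> : labelled_count nA g (fsub1 f p) = #|maps nB g nA (with_face G j0)|.
  by apply: labelled_count_maps => //; rewrite nBE leq_addl.
have -> : labelled_count nB g (fsub1 f j0) = #|maps nB g nB (with_face G p)|.
  exact: labelled_count_maps.
rewrite fj0E [j0 * _ * _]mulnC -card_marked; last first.
  by rewrite j0_gt0 nBE (leq_trans j0nA) ?leq_addl.
rewrite (mulnC nB) (leq_trans _ (leq_mul (card_marked_le _ _ _ _ _) (leqnn _))) //.
by have := marked_iter nB g nA G j0 (p - j0); rewrite -nBE subnKC // ltnW.
Qed.

Lemma leq_divn_fact c LA LB nA nB : 0 < nA -> 0 < nB -> nB.-1`! %| LB ->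
  c * LA * nB`! <= nB * LB * nA`! -> c * (LA %/ nA.-1`!) <= nA * (LB %/ nB.-1`!).
Proof.
move=> nA_gt0 nB_gt0 dvdB.
have factE n : 0 < n -> n`! = n * n.-1`! by case: n.
rewrite (factE nA) // (factE nB) // -{1}(divnK dvdB); set a := LA %/ _; set b := LB %/ _.
have aLA : a * nA.-1`! <= LA by apply: leq_divM.
have k_gt0 : 0 < nA.-1`! * (nB * nB.-1`!) by rewrite !muln_gt0 nB_gt0 !fact_gt0.
move=> le; rewrite -(leq_pmul2r k_gt0); apply: leq_trans (leq_trans le _).
  by rewrite mulnA -(mulnA c) leq_mul2r leq_mul2l aLA !orbT.
by apply: eq_leq; lia.
Qed.

Lemma beta_fminus1_le f g p j0 : 0 < j0 -> j0 <= p ->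
  j0 * fdeg f j0 * beta g (fminus1 f p) <= fsize f * beta g (fminus1 f j0).
Proof.
move=> j0_gt0 j0p; have p_gt0 := leq_trans j0_gt0 j0p.
have [->|fj0] := posnP (fdeg f j0); first by rewrite muln0 mul0n.
have [fp0|fp] := posnP (fdeg f p); first by rewrite beta_fminus1_eq0 // muln0.
rewrite !beta_fminus1 //; have [<-|j0Np] := eqVneq j0 p.
  by rewrite leq_mul2r fdeg_le_fsize ?orbT.
have j0_lt_p : j0 < p by rewrite ltn_neqAle j0Np.
have := labelled_count_fsub1_le g j0_gt0 j0_lt_p fj0 fp.
have := fsize_fsub1 j0_gt0 fj0; have := fsize_fsub1 p_gt0 fp.
rewrite /beta_nat /=; set nA := fsize (fsub1 f p); set nB := fsize (fsub1 f j0).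
move=> nAf nBf le; clearbody nA nB.
have [_|nA_gt0] := posnP nA; first by rewrite muln0.
have nB_gt0 : 0 < nB by lia.
rewrite !gtn_eqF //; apply: leq_trans (leq_divn_fact nA_gt0 nB_gt0 _ le) _.
  exact: dvdn_fact_labelled_count.
by rewrite leq_mul2r -nAf leq_addr orbT.
Qed.

Theorem lemma20 (f : seq nat) (g p j0 : nat) (Hj0 : (1 <= j0)%N) (Hp : (j0 <= p)%N) :
  (j0 * fdeg f j0 * beta g (fminus1 f p) <= fsize f * beta g (fminus1 f j0))%N /\
  (forall (R : realFieldType) (delta : R), (0 < delta)%R ->
     (delta * (fsize f)%:R <= (j0 * fdeg f j0)%:R)%R ->
     (delta * (beta g (fminus1 f p))%:R <= (beta g (fminus1 f j0))%:R)%R).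
Proof.
have le := beta_fminus1_le f g Hj0 Hp.
split=> // R delta _ delta_f.
have [fp0|fp] := posnP (fdeg f p).
  by rewrite beta_fminus1_eq0 ?(leq_trans Hj0) // mulr0.
have f_gt0 : (0 < (fsize f)%:R :> R)%R.
  rewrite ltr0n (leq_trans _ (fdeg_le_fsize f (leq_trans Hj0 Hp))) //.
  by rewrite muln_gt0 fp (leq_trans Hj0).
have leR : ((j0 * fdeg f j0)%:R * (beta g (fminus1 f p))%:R <=
             (fsize f)%:R * (beta g (fminus1 f j0))%:R :> R)%R by rewrite -!natrM ler_nat.
rewrite -(ler_pM2l f_gt0) mulrA (mulrC _ delta) (le_trans _ leR) //.
by rewrite ler_wpM2r ?ler0n.
Qed.
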